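(* Let $F:\mathcal{P}(V,A)\to S_2(A)$ be a consular election rule satisfying SPO and SPP. Let $P$ be a profile, $i$ a voter, $W=F(P)$, $t=\mathrm{best}(P_i,W)$, $s=\mathrm{worst}(P_i,W)$, and let $W'=F(P^{i\uparrow s})$. Then (1) $\mathrm{best}(P_i^{\uparrow s},W')\in\{t,s\}$, and (2) $\mathrm{worst}(P_i^{\uparrow s},W')\in\{s,t\}$.
   Context: $V$ is a finite nonempty set of voters, $A$ a finite set of alternatives; a profile $P$ assigns to each voter $i$ a linear order $P_i$ on $A$ (strict part $\succ_i$, weak part $\succeq_i$); $P_i'P_{-i}$ replaces voter $i$'s order by $P_i'$. $S_2(A)$ is the set of 2-element subsets of $A$; a consular election rule is a map $F:\mathcal{P}(V,A)\to S_2(A)$. $\mathrm{best}(P_i,W)$, $\mathrm{worst}(P_i,W)$ are the $P_i$-best and $P_i$-worst elements of $W$. SPO: for all $P$, $i$, $P_i'$, $\mathrm{best}(P_i,F(P))\succeq_i\mathrm{best}(P_i,F(P_i'P_{-i}))$; SPP: same with $\mathrm{worst}$. $P_i^{\uparrow s}$ is the linear order obtained from $P_i$ by swapping $s$ with the alternative directly above it (no change if $s$ is already ranked first), and $P^{i\uparrow s}$ is the profile obtained from $P$ by replacing $P_i$ with $P_i^{\uparrow s}$. *)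

From mathcomp Require Import all_boot all_order all_fingroup.
Set Implicit Arguments. Unset Strict Implicit. Unset Printing Implicit Defensive.

Section Defs.
Variable A : finType.

(* A linear order on A is encoded by a permutation p : {perm A}; the
   alternative x sits at position  rank p x  (0 = top, i.e. best).  This is a
   bijection between {perm A} and the linear orders on A. *)
Definition rank (p : {perm A}) (x : A) : nat := enum_rank (p x).

Definition sprefers (p : {perm A}) x y := rank p x < rank p y.
Definition wprefers (p : {perm A}) x y := rank p x <= rank p y.

(* P_i^{up s}: swap s with the alternative directly above it (if any) *)
Definition up (p : {perm A}) (s : A) : {perm A} :=
  match [pick u | (rank p u).+1 == rank p s] with
  | Some u => (p * tperm (p s) (p u))%g
  | None => p
  end.

Definition best (p : {perm A}) (W : {set A}) : option A :=
  [pick x in W | [forall y in W, wprefers p x y]].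
Definition worst (p : {perm A}) (W : {set A}) : option A :=
  [pick x in W | [forall y in W, wprefers p y x]].
End Defs.

Section Profiles.
Variables (V A : finType).
Definition profile := {ffun V -> {perm A}}.

Definition upd (P : profile) (i : V) (q : {perm A}) : profile :=
  [ffun j => if j == i then q else P j].

Definition up_profile (P : profile) (i : V) (s : A) : profile :=
  upd P i (up (P i) s).

Definition consular (F : profile -> {set A}) := forall P : profile, #|F P| = 2.

Definition SPO (F : profile -> {set A}) :=
  forall (P : profile) (i : V) (q : {perm A}) (x y : A), best (P i) (F P) = Some x ->
    best (P i) (F (upd P i q)) = Some y -> wprefers (P i) x y.

Definition SPP (F : profile -> {set A}) :=
  forall (P : profile) (i : V) (q : {perm A}) (x y : A), worst (P i) (F P) = Some x ->
    worst (P i) (F (upd P i q)) = Some y -> wprefers (P i) x y.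
End Profiles.

From mathcomp Require Import all_boot all_order all_fingroup.
From mathcomp Require Import zify.

(* Let p = P_i and q = P_i^{up s}: q is p with s exchanged with the alternative
   u directly above it, which exists since t is above s. Applying SPO and SPP to
   the move from p to q, and again to the move back from q to p, gives four
   constraints on W': all of W' is p-weakly below t, some element of W' is
   p-weakly below s, some element is q-weakly above the q-best of {t, s}, and all
   of W' is q-weakly above the q-worst of {t, s}. As the swap moves only s and u,
   and by one position, these force W' = W = {t, s}. *)

Set Implicit Arguments. Unset Strict Implicit. Unset Printing Implicit Defensive.

Lemma rank_inj (A : finType) (p : {perm A}) : injective (rank p).
Proof. by move=> x y /val_inj/enum_rank_inj/perm_inj. Qed.
Arguments rank_inj {A} p.

Section Ranks.
Variable A : finType.
Implicit Types (p : {perm A}) (W : {set A}) (x y : A).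

Lemma bestP p W x :
  best p W = Some x <-> x \in W /\ {in W, forall y, rank p x <= rank p y}.
Proof.
rewrite /best; split.
  by case: pickP => [z /andP[zW /forall_inP z_min] [<-] | //].
move=> [xW x_min]; case: pickP => [z /andP[zW /forall_inP z_min] | /(_ x)].
  by congr Some; apply: (rank_inj p); apply/eqP; rewrite eqn_leq x_min // andbT; exact: z_min.
by rewrite xW /= => /negbT/forall_inPn[y yW]; rewrite /wprefers x_min.
Qed.

Lemma worstP p W x :
  worst p W = Some x <-> x \in W /\ {in W, forall y, rank p y <= rank p x}.
Proof.
rewrite /worst; split.
  by case: pickP => [z /andP[zW /forall_inP z_max] [<-] | //].
move=> [xW x_max]; case: pickP => [z /andP[zW /forall_inP z_max] | /(_ x)].
  by congr Some; apply: (rank_inj p); apply/eqP; rewrite eqn_leq x_max //; exact: z_max.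
by rewrite xW /= => /negbT/forall_inPn[y yW]; rewrite /wprefers x_max.
Qed.

Lemma best_exists p W x : x \in W -> exists b, best p W = Some b.
Proof. by case/(arg_minnP (rank p)) => b bW b_min; exists b; apply/bestP. Qed.

Lemma worst_exists p W x : x \in W -> exists w, worst p W = Some w.
Proof. by case/(arg_maxnP (rank p)) => w wW w_max; exists w; apply/worstP. Qed.

Lemma best_lt_worst p W x y :
  1 < #|W| -> best p W = Some x -> worst p W = Some y -> rank p x < rank p y.
Proof.
case/card_gt1P=> a [b [aW bW ab]] /bestP[_ x_min] /worstP[_ y_max].
rewrite ltnNge; apply: contra ab => yx; apply/eqP/(rank_inj p).
by have := x_min a aW; have := x_min b bW; have := y_max a aW; have := y_max b bW; lia.
Qed.

Lemma rank_best_set2 p x y b :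
  best p [set x; y] = Some b -> rank p b = minn (rank p x) (rank p y).
Proof.
case/bestP; rewrite !inE => /orP[]/eqP-> b_min;
  by have := b_min _ (set21 x y); have := b_min _ (set22 x y); lia.
Qed.

Lemma rank_worst_set2 p x y w :
  worst p [set x; y] = Some w -> rank p w = maxn (rank p x) (rank p y).
Proof.
case/worstP; rewrite !inE => /orP[]/eqP-> w_max;
  by have := w_max _ (set21 x y); have := w_max _ (set22 x y); lia.
Qed.

Lemma best_set2 p x y :
  best p [set x; y] = Some x \/ best p [set x; y] = Some y.
Proof.
have [b best_b] := best_exists p (set21 x y).
by rewrite best_b; case/bestP: best_b; rewrite !inE => /orP[]/eqP-> _; [left | right].
Qed.

Lemma worst_set2 p x y :
  worst p [set x; y] = Some x \/ worst p [set x; y] = Some y.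
Proof.
have [w worst_w] := worst_exists p (set21 x y).
by rewrite worst_w; case/worstP: worst_w; rewrite !inE => /orP[]/eqP-> _; [left | right].
Qed.

Lemma card2_eq_set2 W x y : #|W| = 2 -> x \in W -> y \in W -> x != y -> W = [set x; y].
Proof.
move=> W2 xW yW xy; apply/esym/eqP; rewrite eqEcard cards2 xy W2 leqnn andbT.
by apply/subsetP => z; rewrite !inE => /orP[]/eqP->.
Qed.

Lemma rank_up p s : 0 < rank p s ->
  exists2 u, (rank p u).+1 = rank p s & forall x, rank (up p s) x = rank p (tperm s u x).
Proof.
move=> s_gt0; rewrite /up; case: pickP => [u /eqP us | none].
  by exists u => // x; rewrite /rank permM -tpermJ permJ.
have lt_pred : (rank p s).-1 < #|A| := leq_ltn_trans (leq_pred _) (ltn_ord _).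
have := none ((p^-1)%g (enum_val (Ordinal lt_pred))).
by rewrite /rank permKV enum_valK /= prednK // eqxx.
Qed.

End Ranks.

Section AdjacentSwap.
Variables (A : finType) (p q : {perm A}) (t s u : A).
Hypothesis t_above_s : rank p t < rank p s.
Hypothesis u_just_above_s : (rank p u).+1 = rank p s.
Hypothesis rank_q : forall x, rank q x = rank p (tperm s u x).
Variable W : {set A}.
Hypotheses (W2 : #|W| = 2) (W_below_t : {in W, forall z, rank p t <= rank p z}).
Hypothesis W_reaches_s : exists2 z, z \in W & rank p s <= rank p z.
Hypothesis W_reaches_q_best : exists2 z, z \in W & rank q z <= minn (rank q t) (rank q s).
Hypothesis W_above_q_worst : {in W, forall z, rank q z <= maxn (rank q t) (rank q s)}.

Let s_neq_t : s != t.
Proof. by apply: contraTneq t_above_s => ->; rewrite ltnn. Qed.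

Section DistinctSwap.
Hypothesis t_neq_u : t != u.

Let t_above_u : rank p t < rank p u.
Proof. by rewrite ltn_neqAle (inj_eq (rank_inj p)) t_neq_u -ltnS u_just_above_s. Qed.

Let rank_q_t : rank q t = rank p t.
Proof. by rewrite rank_q tpermD // eq_sym. Qed.

Lemma swap_mem_best : t \in W.
Proof.
case: W_reaches_q_best => z zW; have := W_below_t zW.
rewrite rank_q_t (rank_q s) tpermL rank_q; case: tpermP => [_ | _ | _ _] t_le_z z_le_t; try lia.
by have -> : t = z by apply: (rank_inj p); lia.
Qed.

Lemma swap_mem_worst : s \in W.
Proof.
case: W_reaches_s => z zW; have := W_above_q_worst zW; move: zW.
rewrite rank_q_t (rank_q s) tpermL rank_q; case: tpermP => [-> // | -> _ | _ _ _]; lia.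
Qed.

End DistinctSwap.

Lemma swap_sub_pair : t = u -> W \subset [set t; s].
Proof.
move=> tu; have t_just_above_s := u_just_above_s; rewrite -tu in t_just_above_s.
apply/subsetP => z zW; have := W_below_t zW; have := W_above_q_worst zW.
rewrite !rank_q -tu tpermL tpermR; case: tpermP => [-> | -> | _ _]; rewrite ?set21 ?set22 // => *.
have : rank p z = rank p t \/ rank p z = rank p s by lia.
by case=> /(rank_inj p) ->; rewrite ?set21 ?set22.
Qed.

Lemma swap_outcome : W = [set t; s].
Proof.
have [tu|tu] := eqVneq t u.
  by apply/eqP; rewrite eqEcard swap_sub_pair // cards2 eq_sym s_neq_t W2.
by apply: card2_eq_set2; rewrite ?swap_mem_best ?swap_mem_worst // eq_sym.
Qed.

End AdjacentSwap.

Section Profiles.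
Variables (V A : finType).
Implicit Types (P : profile V A) (i : V) (q : {perm A}).

Lemma upd_same P i q : upd P i q i = q.
Proof. by rewrite ffunE eqxx. Qed.

Lemma upd_upd_same P i q : upd (upd P i q) i (P i) = P.
Proof. by apply/ffunP => j; rewrite !ffunE; case: eqP => // ->. Qed.

Variable F : profile V A -> {set A}.
Hypothesis F_consular : consular F.

Lemma consular_exists P : exists x, x \in F P.
Proof. by apply/card_gt0P; rewrite F_consular. Qed.

Section SPO.
Hypothesis F_SPO : SPO F.

Lemma SPO_deviation_worse P i q x :
  best (P i) (F P) = Some x -> {in F (upd P i q), forall z, rank (P i) x <= rank (P i) z}.
Proof.
move=> best_x z zW; have [b best_b] := best_exists (P i) zW.
exact: leq_trans (F_SPO best_x best_b) (proj2 (proj1 (bestP _ _ _) best_b) z zW).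
Qed.

Lemma SPO_deviation_better P i q y :
  best q (F P) = Some y -> exists2 z, z \in F (upd P i q) & rank q z <= rank q y.
Proof.
move=> best_y; have [z0 z0W] := consular_exists (upd P i q).
have [b best_b] := best_exists q z0W; exists b; first by case/bestP: best_b.
by have := @F_SPO (upd P i q) i (P i) b y; rewrite upd_same upd_upd_same; apply.
Qed.

End SPO.

Section SPP.
Hypothesis F_SPP : SPP F.

Lemma SPP_deviation_worse P i q x :
  worst (P i) (F P) = Some x -> exists2 z, z \in F (upd P i q) & rank (P i) x <= rank (P i) z.
Proof.
move=> worst_x; have [z0 z0W] := consular_exists (upd P i q).
have [w worst_w] := worst_exists (P i) z0W; exists w; first by case/worstP: worst_w.
exact: F_SPP worst_x worst_w.
Qed.

Lemma SPP_deviation_better P i q y :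
  worst q (F P) = Some y -> {in F (upd P i q), forall z, rank q z <= rank q y}.
Proof.
move=> worst_y z zW; have [w worst_w] := worst_exists q zW.
have := @F_SPP (upd P i q) i (P i) w y; rewrite upd_same upd_upd_same => /(_ worst_w worst_y) w_y.
exact: leq_trans (proj2 (proj1 (worstP _ _ _) worst_w) z zW) w_y.
Qed.

End SPP.
End Profiles.

Theorem lemma9 (V A : finType) (F : profile V A -> {set A})
  (hV : 0 < #|V|) (hF : consular F) (hSPO : SPO F) (hSPP : SPP F)
  (P : profile V A) (i : V) (t s : A) :
  best (P i) (F P) = Some t -> worst (P i) (F P) = Some s ->
  (best (up (P i) s) (F (up_profile P i s)) = Some t \/
   best (up (P i) s) (F (up_profile P i s)) = Some s) /\
  (worst (up (P i) s) (F (up_profile P i s)) = Some s \/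
   worst (up (P i) s) (F (up_profile P i s)) = Some t).
Proof.
move=> best_t worst_s; set p := P i; set q := up p s.
have t_above_s : rank p t < rank p s.
  by apply: best_lt_worst best_t worst_s; rewrite hF.
have FP : F P = [set t; s].
  case/bestP: best_t => tW _; case/worstP: worst_s => sW _.
  by apply: card2_eq_set2; rewrite // -(inj_eq (rank_inj p)) ltn_eqF.
have [u u_just_above_s rank_q] := rank_up (leq_ltn_trans (leq0n _) t_above_s).
have [b best_b] := best_exists q (set21 t s).
have [w worst_w] := worst_exists q (set21 t s).
have -> : F (up_profile P i s) = [set t; s].
  apply: (swap_outcome t_above_s u_just_above_s rank_q (hF _)).
  - exact: SPO_deviation_worse.
  - exact: SPP_deviation_worse.
  - by rewrite -(rank_best_set2 best_b); rewrite -FP in best_b; apply: SPO_deviation_better.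
  - by rewrite -(rank_worst_set2 worst_w); rewrite -FP in worst_w; apply: SPP_deviation_better.
by split; [exact: best_set2 | apply/or_comm/worst_set2].
Qed.
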